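(* Let $I$ be the set of inputs and $O$ be the set of outputs, and let $\Phi_{\mathrm{LTL}}$ be the LTL formula derived from a given $\mathrm{CTL}^*$ formula $\Phi_{\mathrm{CTL}^*}$ by the construction described in the context. Then: $\Phi_{\mathrm{CTL}^*}$ is realisable $\Leftrightarrow$ $\Phi_{\mathrm{LTL}}$ is realisable.
   Context: Realisability is with respect to Moore systems (outputs are delayed with respect to inputs); $\Phi_{\mathrm{CTL}^*}$ is a $\mathrm{CTL}^*$ state formula over inputs $I$ and outputs $O$ in positive normal form. The derivation of $\Phi_{\mathrm{LTL}}$ is as follows. Let $F_{\mathit{exist}}$ be the set of existentially quantified state subformulas $\mathsf{E}\varphi$ of $\Phi_{\mathrm{CTL}^*}$ and $F_{\mathit{univ}}$ the set of universally quantified ones $\mathsf{A}\varphi$. Let $k$ be the total number of states of the nondeterministic Büchi word automata for the path formulas of the existential subformulas. Introduce new outputs: for each $\mathsf{E}\varphi\in F_{\mathit{exist}}$ an integer-valued output $v_{\mathsf{E}\varphi}\in\{0,\dots,k\}$; for each $j\in\{1,\dots,k\}$ an output $d_j$ whose value is an input valuation in $2^I$ (a direction), where $\mathsf{G}\, d_j$ means that along the path the input always equals the direction given by $d_j$; and for each $\mathsf{A}\varphi\in F_{\mathit{univ}}$ a Boolean output $p_{\mathsf{A}\varphi}$. For a path formula $\varphi$, let $\varphi'$ be obtained by replacing every subformula $\mathsf{E}\psi$ by $v_{\mathsf{E}\psi}\neq 0$ and every subformula $\mathsf{A}\psi$ by $p_{\mathsf{A}\psi}$; let $\Phi'$ be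 obtained likewise from $\Phi_{\mathrm{CTL}^*}$. Then $\Phi_{\mathrm{LTL}} = \Phi' \wedge \bigwedge_{\mathsf{E}\varphi\in F_{\mathit{exist}}}\bigwedge_{j\in\{1,\dots,k\}} \mathsf{G}\big[v_{\mathsf{E}\varphi}=j \rightarrow (\mathsf{G}\, d_j \rightarrow \varphi')\big] \wedge \bigwedge_{\mathsf{A}\varphi\in F_{\mathit{univ}}} \mathsf{G}\big[p_{\mathsf{A}\varphi}\rightarrow \varphi'\big]$, with inputs $I$ and outputs $O$ together with the new outputs. *)

From HB Require Import structures.
From mathcomp Require Import all_boot.
Set Implicit Arguments. Unset Strict Implicit. Unset Printing Implicit Defensive.

Section Defs.
Variables (I O : finType).

Definition inval := {ffun I -> bool}.
Definition outval := {ffun O -> bool}.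

Inductive ctl : Type :=
| CTrue | CFalse
| CIn of I | CNIn of I
| COut of O | CNOut of O
| CAnd of ctl & ctl | COr of ctl & ctl
| CX of ctl | CU of ctl & ctl | CR of ctl & ctl
| CE of ctl | CA of ctl.

Lemma ctl_eq_dec (x y : ctl) : {x = y} + {x <> y}.
Proof. decide equality; exact: eq_comparable. Qed.
HB.instance Definition _ := hasDecEq.Build ctl (compareP ctl_eq_dec).

Fixpoint is_state (f : ctl) : bool :=
  match f with
  | CTrue | CFalse | CIn _ | CNIn _ | COut _ | CNOut _ => true
  | CAnd a b | COr a b => is_state a && is_state b
  | CE _ | CA _ => true
  | _ => false
  end.

Fixpoint subformulas (f : ctl) : seq ctl :=
  f :: match f with
       | CAnd a b | COr a b | CU a b | CR a b => subformulas a ++ subformulas b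
       | CX a | CE a | CA a => subformulas a
       | _ => [::]
       end.

Definition isE (f : ctl) := if f is CE _ then true else false.
Definition isA (f : ctl) := if f is CA _ then true else false.
Definition path_of (f : ctl) := match f with CE p | CA p => p | _ => f end.

Definition F_exist (Phi : ctl) := undup [seq f <- subformulas Phi | isE f].
Definition F_univ (Phi : ctl) := undup [seq f <- subformulas Phi | isA f].

Record moore (X : Type) : Type := Moore {
  mstate : Type;
  minit : mstate;
  mtrans : mstate -> inval -> mstate;
  mout : mstate -> X }.
Arguments minit {X} m.
Arguments mtrans {X} m _ _.
Arguments mout {X} m _.

(* output produced at time t along the input sequence pi: it depends only on
   the inputs pi 0, ..., pi (t-1) (Moore) *)
Definition out_at X (M : moore X) (pi : nat -> inval) (t : nat) : X :=
  mout M (foldl (mtrans M) (minit M) (mkseq pi t)).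

(* ---------- CTL* semantics on the computation tree of M ----------
   A position is (pi, t): the tree node reached by pi 0 .. pi (t-1); the
   letter at time t is (pi t, output at that node). *)
Fixpoint csat (M : moore outval) (f : ctl) (pi : nat -> inval) (t : nat) : Prop :=
  match f with
  | CTrue => True
  | CFalse => False
  | CIn i => pi t i
  | CNIn i => ~~ pi t i
  | COut o => out_at M pi t o
  | CNOut o => ~~ out_at M pi t o
  | CAnd a b => csat M a pi t /\ csat M b pi t
  | COr a b => csat M a pi t \/ csat M b pi t
  | CX a => csat M a pi t.+1
  | CU a b => exists j, t <= j /\ csat M b pi j /\
                        forall m, t <= m -> m < j -> csat M a pi m
  | CR a b => forall j, t <= j ->
                csat M b pi j \/ exists m, [/\ t <= m, m < j & csat M a pi m]
  | CE a => exists pi', (forall m, m < t -> pi' m = pi m) /\ csat M a pi' t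
  | CA a => forall pi', (forall m, m < t -> pi' m = pi m) -> csat M a pi' t
  end.

Definition ctl_realisable (Phi : ctl) : Prop :=
  exists M : moore outval, forall pi, csat M Phi pi 0.

Inductive ltl (L : Type) : Type :=
| LAtom of (L -> bool)
| LNot of ltl L
| LAnd of ltl L & ltl L | LOr of ltl L & ltl L
| LX of ltl L | LU of ltl L & ltl L | LR of ltl L & ltl L.

Fixpoint lsat L (f : ltl L) (w : nat -> L) (t : nat) : Prop :=
  match f with
  | LAtom p => p (w t)
  | LNot a => ~ lsat a w t
  | LAnd a b => lsat a w t /\ lsat b w t
  | LOr a b => lsat a w t \/ lsat b w t
  | LX a => lsat a w t.+1
  | LU a b => exists j, t <= j /\ lsat b w j /\ forall m, t <= m -> m < j -> lsat a w m
  | LR a b => forall j, t <= j ->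
                lsat b w j \/ exists m, [/\ t <= m, m < j & lsat a w m]
  end.

Definition LTrue L : ltl L := LAtom (fun _ => true).
Definition LFalse L : ltl L := LAtom (fun _ => false).
Definition LImp L (a b : ltl L) : ltl L := LOr (LNot a) b.
Definition LG L (a : ltl L) : ltl L := LR (LFalse L) a.
Definition LBigAnd L (s : seq (ltl L)) : ltl L := foldr (@LAnd L) (LTrue L) s.

Definition ltl_realisable X (Phi : ltl (inval * X)) : Prop :=
  exists M : moore X, forall pi, lsat Phi (fun t => (pi t, out_at M pi t)) 0.

(* Translation of a CTL* formula into LTL, given how to read inputs, outputs
   and (the truth of) the quantified state subformulas E psi / A psi off a letter *)
Fixpoint tr L (inp : L -> inval) (out : L -> outval) (st : ctl -> L -> bool)
  (f : ctl) : ltl L :=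
  match f with
  | CTrue => LTrue L
  | CFalse => LFalse L
  | CIn i => LAtom (fun l => inp l i)
  | CNIn i => LAtom (fun l => ~~ inp l i)
  | COut o => LAtom (fun l => out l o)
  | CNOut o => LAtom (fun l => ~~ out l o)
  | CAnd a b => LAnd (tr inp out st a) (tr inp out st b)
  | COr a b => LOr (tr inp out st a) (tr inp out st b)
  | CX a => LX (tr inp out st a)
  | CU a b => LU (tr inp out st a) (tr inp out st b)
  | CR a b => LR (tr inp out st a) (tr inp out st b)
  | CE a => LAtom (st (CE a))
  | CA a => LAtom (st (CA a))
  end.

Record nbw (L : Type) : Type := NBW {
  nstate : finType;
  ninit : pred nstate;
  ntrans : nstate -> L -> nstate -> bool;
  nacc : pred nstate }.
Arguments ninit {L} n _.
Arguments ntrans {L} n _ _ _.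
Arguments nacc {L} n _.

Definition nbw_accepts L (A : nbw L) (w : nat -> L) : Prop :=
  exists r : nat -> nstate A,
    [/\ ninit A (r 0), forall t, ntrans A (r t) (w t) (r t.+1)
      & forall n, exists2 m, n <= m & nacc A (r m)].

(* Alphabet of the NBW for a path formula: input valuation, output valuation,
   and a valuation of the (maximal) state subformulas, treated as atoms. *)
Definition sletter := (inval * (outval * (ctl -> bool)))%type.

Definition skeleton (p : ctl) : ltl sletter :=
  tr (fun l : sletter => l.1) (fun l => l.2.1) (fun g l => l.2.2 g) p.

Definition nbw_for (A : nbw sletter) (p : ctl) : Prop :=
  forall w, nbw_accepts A w <-> lsat (skeleton p) w 0.

Definition kstates (Phi : ctl) (aut : ctl -> nbw sletter) : nat :=
  \sum_(e <- F_exist Phi) #|nstate (aut e)|.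

(* New outputs, for a given k:
   - original outputs O,
   - v_e in {0..k} for each E-subformula e (indexed by formulas),
   - directions d_j in 2^I, j in {1..k} (represented by 'I_k, d_j = d (j-1)),
   - Boolean p_a for each A-subformula a (indexed by formulas). *)
Definition extout (k : nat) :=
  (outval * ((ctl -> 'I_k.+1) * (('I_k -> inval) * (ctl -> bool))))%type.

Section Construction.
Variables (Phi : ctl) (aut : ctl -> nbw sletter).
Let k := kstates Phi aut.
Let L := (inval * extout k)%type.

Definition x_out (l : L) : outval := l.2.1.
Definition x_v (l : L) (e : ctl) : nat := l.2.2.1 e.
Definition x_d (l : L) (j : 'I_k) : inval := l.2.2.2.1 j.
Definition x_p (l : L) (a : ctl) : bool := l.2.2.2.2 a.

Definition x_st (g : ctl) (l : L) : bool :=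
  match g with
  | CE _ => x_v l g != 0
  | CA _ => x_p l g
  | _ => false
  end.

Definition prime (f : ctl) : ltl L := tr (fun l : L => l.1) x_out x_st f.

Definition Phi_LTL : ltl L :=
  LAnd (prime Phi)
   (LAnd
     (LBigAnd [seq LBigAnd
        [seq LG (LImp (LAtom (fun l : L => x_v l e == (nat_of_ord j).+1))
                      (LImp (LG (LAtom (fun l : L => l.1 == x_d l j)))
                            (prime (path_of e))))
        | j : 'I_k <- enum 'I_k]
      | e <- F_exist Phi])
     (LBigAnd [seq LG (LImp (LAtom (fun l : L => x_p l a)) (prime (path_of a)))
              | a <- F_univ Phi])).
End Construction.
End Defs.

(* From a Moore machine realising Phi_CTL* we build one for Phi_LTL that remembers the
   input history h and outputs p_(A phi) := [A phi holds after h].  When E phi holds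
   after h, the Buchi automaton for phi accepts some continuation of h from some initial
   state q.  All such witnesses are taken from one positional strategy on the positions
   (h, q), so a witness is a stream of directions determined by a pair (h, q), and at most
   k of them are ever needed at once.  The machine keeps them in k slots, outputs their next
   directions as the d_j, and points v_(E phi) to the slot carrying the witness for E phi;
   a slot survives as long as the input follows it.  Conversely, forgetting the extra
   outputs of a machine realising Phi_LTL realises Phi_CTL*: E phi flagged by v = j is
   witnessed by the input sequence that follows d_j from then on, and A phi flagged by p
   is enforced on every path by the last conjunct of Phi_LTL. *)

From Pilot Require Import Defs.
From HB Require Import structures.
From mathcomp Require Import all_boot zify boolp.

Set Implicit Arguments. Unset Strict Implicit. Unset Printing Implicit Defensive.

Section LTL.
Variable L : Type.
Implicit Types (f : ltl L) (w : nat -> L).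

Lemma lsat_shift f w t s : lsat f w (t + s) <-> lsat f (fun i => w (t + i)) s.
Proof.
elim: f s => [p|a IH|a IHa b IHb|a IHa b IHb|a IH|a IHa b IHb|a IHa b IHb] s /=.
- by [].
- by rewrite IH.
- by rewrite IHa IHb.
- by rewrite IHa IHb.
- by rewrite -addnS IH.
- split=> -[j [tj [hb ha]]].
  + exists (j - t); split; first lia.
    split=> [|m m1 m2]; first by rewrite -IHb subnKC //; lia.
    by rewrite -IHa; apply: ha; lia.
  + exists (t + j); split; first lia.
    split=> [|m m1 m2]; first by rewrite IHb.
    have -> : m = t + (m - t) by lia.
    by rewrite IHa; apply: ha; lia.
- split=> H j tj.
  + case: (H (t + j)) => [|hb|[m [m1 m2 hm]]]; first lia.
    * by left; rewrite -IHb.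
    * right; exists (m - t); split; try lia.
      by rewrite -IHa subnKC //; lia.
  + have -> : j = t + (j - t) by lia.
    case: (H (j - t)) => [|hb|[m [m1 m2 hm]]]; first lia.
    * by left; rewrite IHb.
    * by right; exists (t + m); split; [lia | lia | rewrite IHa].
Qed.

Lemma lsat_LG f w t : lsat (LG f) w t <-> forall j, t <= j -> lsat f w j.
Proof.
split=> H j /H; last by left.
by case=> // -[m []].
Qed.

Lemma lsat_LImp f g w t : lsat (LImp f g) w t <-> (lsat f w t -> lsat g w t).
Proof.
split=> [[nf|] // /nf //|fg]; rewrite /=.
by case: (pselect (lsat f w t)) => [/fg|]; [right|left].
Qed.

Lemma lsat_LBigAnd (T : eqType) (F : T -> ltl L) (s : seq T) w t :
  lsat (LBigAnd [seq F x | x <- s]) w t <-> forall x, x \in s -> lsat (F x) w t.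
Proof.
elim: s => [|x s IH] /=; first by split.
rewrite IH; split=> [[hx hs] y|H]; first by rewrite inE => /predU1P [->|/hs].
by split=> [|y ys]; apply: H; rewrite inE ?eqxx ?ys ?orbT.
Qed.

End LTL.

Section Formulas.
Variables (I O : finType).
Implicit Types (f g h : ctl I O) (Phi : ctl I O).

Definition quantified f := isE f || isA f.

Lemma subformulas_trans f g h :
  g \in subformulas f -> h \in subformulas g -> h \in subformulas f.
Proof.
elim: f g => [||i|i|o|o|a IHa b IHb|a IHa b IHb|a IH|a IHa b IHb|a IHa b IHb|a IH|a IH] g;
  rewrite /= in_cons => /predU1P [-> //|]; rewrite ?mem_cat //.
all: try by move=> /orP [] sg hg; rewrite in_cons mem_cat;
  [rewrite (IHa _ sg hg) | rewrite (IHb _ sg hg)]; rewrite !orbT.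
all: by move=> sg hg; rewrite in_cons (IH _ sg hg) orbT.
Qed.

Lemma subformulas_path_of f g : g \in subformulas (path_of f) -> g \in subformulas f.
Proof. by case: f => //= a sg; rewrite inE sg orbT. Qed.

Lemma mem_F_exist Phi e : (e \in F_exist Phi) = (e \in subformulas Phi) && isE e.
Proof. by rewrite mem_undup mem_filter andbC. Qed.

Lemma mem_F_univ Phi a : (a \in F_univ Phi) = (a \in subformulas Phi) && isA a.
Proof. by rewrite mem_undup mem_filter andbC. Qed.

End Formulas.

Section Semantics.
Variables (I O : finType).
Implicit Types (M : moore I (outval O)) (pi : nat -> inval I).

Lemma mkseq_eq_prefix T (pi pi' : nat -> T) t :
  (forall m, m < t -> pi' m = pi m) -> mkseq pi' t = mkseq pi t.
Proof. by move=> eq_pi; apply/eq_in_map => m; rewrite mem_iota => /eq_pi. Qed.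

Lemma out_at_eq_prefix X (M : moore I X) pi pi' t :
  (forall m, m < t -> pi' m = pi m) -> out_at M pi' t = out_at M pi t.
Proof. by move=> eq_pi; rewrite /out_at (mkseq_eq_prefix eq_pi). Qed.

Lemma csat_quantified_prefix M g pi pi' t : quantified g ->
  (forall m, m < t -> pi' m = pi m) -> csat M g pi' t -> csat M g pi t.
Proof.
case: g => // a _ eq_pi /=.
- by move=> [pi'' [eq_pi'' sat]]; exists pi''; split=> // m mt; rewrite eq_pi'' ?eq_pi.
- by move=> sat pi'' eq_pi''; apply: sat => m mt; rewrite eq_pi'' ?eq_pi.
Qed.

Definition run_word X (M : moore I X) pi t : inval I * X := (pi t, out_at M pi t).

Definition labelled_word M pi (t : nat) : sletter I O :=
  (pi t, (out_at M pi t, fun g => `[< csat M g pi t >])).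

Lemma lsat_skeleton M f pi t :
  lsat (skeleton f) (labelled_word M pi) t <-> csat M f pi t.
Proof.
elim: f t => [||i|i|o|o|a IHa b IHb|a IHa b IHb|a IH|a IHa b IHb|a IHa b IHb|a _|a _] t /=;
  rewrite ?asboolE //.
- by rewrite IHa IHb.
- by rewrite IHa IHb.
- split=> -[j [tj [hb ha]]]; exists j; do !split=> //.
  + exact/IHb.
  + by move=> m m1 m2; apply/IHa/ha.
  + exact/IHb.
  + by move=> m m1 m2; apply/IHa/ha.
- split=> H j /H [hb|[m [m1 m2 ha]]].
  + by left; apply/IHb.
  + by right; exists m; split=> //; apply/IHa.
  + by left; apply/IHb.
  + by right; exists m; split=> //; apply/IHa.
Qed.

Section Translation.
Variables (L1 L2 : Type) (S : pred (ctl I O)).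
Variables (inp1 : L1 -> inval I) (out1 : L1 -> outval O) (st1 : ctl I O -> L1 -> bool).
Variables (inp2 : L2 -> inval I) (out2 : L2 -> outval O) (st2 : ctl I O -> L2 -> bool).
Variables (w1 : nat -> L1) (w2 : nat -> L2).
Hypotheses (eq_inp : forall t, inp2 (w2 t) = inp1 (w1 t))
           (eq_out : forall t, out2 (w2 t) = out1 (w1 t)).
Hypothesis le_st : forall g t, S g -> quantified g -> st1 g (w1 t) -> st2 g (w2 t).

(* [tr] introduces no negation, so truth is monotone in the state atoms. *)
Lemma lsat_tr_mono f : all S (subformulas f) ->
  forall t, lsat (tr inp1 out1 st1 f) w1 t -> lsat (tr inp2 out2 st2 f) w2 t.
Proof.
elim: f => [||i|i|o|o|a IHa b IHb|a IHa b IHb|a IH|a IHa b IHb|a IHa b IHb|a _|a _] /=;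
  rewrite ?all_cat => Sf t; rewrite ?eq_inp ?eq_out //.
all: try (case/and3P: Sf => _ /IHa {}IHa /IHb {}IHb).
all: try (case/andP: Sf => [Sf _]; exact: le_st).
- by case=> /IHa ha /IHb hb.
- by case=> [/IHa|/IHb]; [left|right].
- by case/andP: Sf => _ /IH; apply.
- move=> [j [tj [hb ha]]]; exists j; split=> //; split=> [|m m1 m2]; first exact: IHb.
  exact/IHa/ha.
- move=> H j /H [/IHb|[m [m1 m2 /IHa]]]; first by left.
  by right; exists m.
Qed.

End Translation.

Section TranslationCorrectness.
Variables (L : Type) (S : pred (ctl I O)).
Variables (inp : L -> inval I) (out : L -> outval O) (st : ctl I O -> L -> bool).
Variables (M : moore I (outval O)) (pi : nat -> inval I) (w : nat -> L).
Hypotheses (inp_w : forall t, inp (w t) = pi t)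
           (out_w : forall t, out (w t) = out_at M pi t).

Lemma lsat_tr_sound f :
  (forall g t, S g -> quantified g -> st g (w t) -> csat M g pi t) ->
  all S (subformulas f) ->
  forall t, lsat (tr inp out st f) w t -> csat M f pi t.
Proof.
move=> st_sound Sf t /(lsat_tr_mono (w2 := labelled_word M pi) _ _ _ Sf) sat.
apply/lsat_skeleton/sat => // g t' Sg qg /(st_sound _ _ Sg qg); exact: asboolT.
Qed.

Lemma lsat_tr_complete f :
  (forall g t, S g -> quantified g -> csat M g pi t -> st g (w t)) ->
  all S (subformulas f) ->
  forall t, csat M f pi t -> lsat (tr inp out st f) w t.
Proof.
move=> st_complete Sf t /lsat_skeleton.
apply: (lsat_tr_mono _ _ _ Sf) => // g t' Sg qg /asboolP; exact: st_complete.
Qed.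

End TranslationCorrectness.
End Semantics.

Section BuchiGraph.
Variables (V : Type) (E : V -> V -> Prop) (acc : V -> Prop).

Definition buchi_play (x : V) (p : nat -> V) :=
  [/\ p 0 = x, forall i, E (p i) (p i.+1) & forall n, exists2 m, n <= m & acc (p m)].

Definition winning x := exists p, buchi_play x p.

Definition wins_at n x := exists p, buchi_play x p /\ acc (p n).

Lemma buchi_play_drop x p m : buchi_play x p -> buchi_play (p m) (fun i => p (m + i)).
Proof.
move=> [_ Ep accp]; split=> [|i|n]; rewrite ?addn0 ?addnS //.
have [m' nm' accm'] := accp (m + n); exists (m' - m); first lia.
by rewrite subnKC //; lia.
Qed.

Lemma winning_wins_at x : winning x -> exists n, `[< wins_at n x >].
Proof.
by move=> [p play]; have [_ _ /(_ 0) [n _ accn]] := play; exists n; apply/asboolP; exists p.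
Qed.

Definition rank x : nat :=
  if pselect (exists n, `[< wins_at n x >]) is left ex_n then ex_minn ex_n else 0.

Lemma rankP x : winning x -> wins_at (rank x) x /\ forall n, wins_at n x -> rank x <= n.
Proof.
move=> /winning_wins_at ex_n; rewrite /rank; case: pselect => // {}ex_n.
by case: ex_minnP => n /asboolP wn min_n; split=> // m /asboolP /min_n.
Qed.

(* Positional strategy: move along a winning play that reaches [acc] fastest. *)
Definition next x : V :=
  if pselect (wins_at (rank x) x) is left w then sval (cid w) 1 else x.

Lemma next_spec x : winning x ->
  [/\ E x (next x), winning (next x), rank x = 0 -> acc x
    & 0 < rank x -> rank (next x) < rank x].
Proof.
move=> /rankP [w _]; rewrite /next; case: pselect => // {}w.
case: (cid w) => p /= [play accp]; have [p0 Ep _] := play.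
have play1 := buchi_play_drop 1 play.
split=> [||r0|]; first by rewrite -p0.
- by exists (fun i => p (1 + i)).
- by rewrite -p0 -r0.
case: (rank x) accp => // n accp _; rewrite ltnS.
have wins_n : wins_at n (p 1) by exists (fun i => p (1 + i)).
exact: (proj2 (rankP (ex_intro _ _ play1)) _ wins_n).
Qed.

Lemma winning_iter_next i x : winning x -> winning (iter i next x).
Proof. by move=> wx; elim: i => //= i /next_spec []. Qed.

Lemma iter_next_reaches_acc x : winning x -> exists m, acc (iter m next x).
Proof.
have [n] := ubnP (rank x); elim: n x => // n IH x; rewrite ltnS => rx wx.
have [_ wnx accx rank_next] := next_spec wx.
case: (posnP (rank x)) => [/accx|r_pos]; first by exists 0.
have [|m accm] := IH (next x) _ wnx; first by have := rank_next r_pos; lia.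
by exists m.+1; rewrite iterSr.
Qed.

Theorem next_play x : winning x -> buchi_play x (fun i => iter i next x).
Proof.
move=> wx; split=> // [i|n]; first by have [] := next_spec (winning_iter_next i wx).
have [m accm] := iter_next_reaches_acc (winning_iter_next n wx).
by exists (m + n); rewrite ?iterD //; lia.
Qed.

End BuchiGraph.

Section HistoryStrategy.
Variables (I : finType) (S : Type) (A : nbw S) (letter : seq (inval I) -> inval I -> S).

Definition position := (seq (inval I) * nstate A)%type.

Definition step (x y : position) :=
  exists a, y.1 = rcons x.1 a /\ ntrans x.2 (letter x.1 a) y.2.

Definition accepting (x : position) : Prop := nacc x.2.
Local Notation winning := (winning step accepting).
Local Notation next := (next step accepting).

Definition history_word (pi : nat -> inval I) (t : nat) : S := letter (mkseq pi t) (pi t).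

Definition strategy_input (x : position) (i : nat) : inval I :=
  last [ffun => false] (iter i.+1 next x).1.

Lemma strategy_input_next x i : strategy_input x i.+1 = strategy_input (next x) i.
Proof. by rewrite /strategy_input iterSr. Qed.

Lemma next_step x : winning x ->
  (next x).1 = rcons x.1 (strategy_input x 0) /\
  ntrans x.2 (letter x.1 (strategy_input x 0)) (next x).2.
Proof.
move=> wx; have [[a [nx ntr]] _ _ _] := next_spec wx.
by rewrite /strategy_input /= nx last_rcons.
Qed.

Lemma strategy_input_tail x : winning x ->
  exists2 q, winning (rcons x.1 (strategy_input x 0), q) &
    (fun i => strategy_input x i.+1) = strategy_input (rcons x.1 (strategy_input x 0), q).
Proof.
move=> wx; have [nx _] := next_step wx; have [_ wnx _ _] := next_spec wx.
exists (next x).2; rewrite -nx -surjective_pairing //.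
by apply: funext => i; rewrite strategy_input_next.
Qed.

Lemma strategy_accepts pi t q :
  winning (mkseq pi t, q) -> ninit q ->
  (forall i, pi (t + i) = strategy_input (mkseq pi t, q) i) ->
  nbw_accepts A (fun i => history_word pi (t + i)).
Proof.
move=> wq q0 pi_strat; set x := (mkseq pi t, q).
have hist i : (iter i next x).1 = mkseq pi (t + i).
  elim: i => [|i IH]; first by rewrite addn0.
  have [-> _] := next_step (winning_iter_next i wq).
  by rewrite IH addnS mkseqS pi_strat.
exists (fun i => (iter i next x).2); have [_ _ accs] := next_play wq; split=> // i.
have [_] := next_step (winning_iter_next i wq).
by rewrite /history_word -hist pi_strat.
Qed.

Lemma accepts_winning pi t : nbw_accepts A (fun i => history_word pi (t + i)) ->
  exists2 q, ninit q & winning (mkseq pi t, q).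
Proof.
move=> [r [r0 rtr raccs]]; exists (r 0) => //.
exists (fun i => (mkseq pi (t + i), r i)); split=> //= [|i]; first by rewrite addn0.
by exists (pi (t + i)); rewrite /= addnS mkseqS; split=> //; apply: rtr.
Qed.

End HistoryStrategy.

Arguments accepting {I S A} x.

Section Slots.
Variables (T : Type) (k : nat).
Implicit Types (S : 'I_k -> option T) (tau : T).

Definition slots_inj S := forall j1 j2 s, S j1 = Some s -> S j2 = Some s -> j1 = j2.

Definition insert_slot tau S : 'I_k -> option T :=
  if [pick j | `[< S j = Some tau >]] is Some _ then S
  else if [pick j | ~~ S j] is Some j0 then fun j => if j == j0 then Some tau else S j
  else S.

Lemma insert_slot_keep tau S j s : S j = Some s -> insert_slot tau S j = Some s.
Proof.
rewrite /insert_slot => Sj; case: pickP => // _; case: pickP => // j0 free.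
by case: eqP => // eq_j; move: free; rewrite -eq_j Sj.
Qed.

Lemma insert_slot_Some tau S j s :
  insert_slot tau S j = Some s -> S j = Some s \/ s = tau.
Proof.
rewrite /insert_slot; case: pickP => [_ _|_]; first by left.
case: pickP => [j0 _|_]; last by left.
by case: eqP => _ => [[->]|]; [right | left].
Qed.

Lemma insert_slot_inj tau S : slots_inj S -> slots_inj (insert_slot tau S).
Proof.
rewrite /insert_slot => injS; case: pickP => // no_tau; case: pickP => // j0 _.
have {}no_tau j : S j <> Some tau by move=> Sj; have /asboolP := no_tau j.
move=> j1 j2 s; do 2 case: eqP => [->|_]; rewrite ?eqxx //.
- by move=> <- /no_tau.
- by move=> /[swap] <- /no_tau.
- exact: injS.
Qed.

Lemma insert_slotP tau S : (exists j, S j = Some tau \/ S j = None) ->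
  exists j, insert_slot tau S j = Some tau.
Proof.
move=> ex_j; rewrite /insert_slot; case: pickP => [j /asboolP|no_tau]; first by exists j.
case: pickP => [j0 _|full]; first by exists j0; rewrite eqxx.
case: ex_j => j [Sj|Sj]; first by have /asboolP := no_tau j.
by have := full j; rewrite Sj.
Qed.

(* Pigeonhole: otherwise the contents of [S] and [tau] are [k.+1] distinct values of [g]. *)
Lemma free_slot n (g : 'I_n -> T) S tau : n <= k -> slots_inj S ->
  (forall j s, S j = Some s -> exists i, s = g i) -> (exists i, tau = g i) ->
  (forall j, S j <> Some tau) -> exists j, S j = None.
Proof.
move=> nk injS S_g tau_g no_tau; case: (pselect (exists j, S j = None)) => // free.
have /fin_all_exists [s Ss] j : exists s, S j = Some s.
  by case Sj: (S j) => [s|]; [exists s | case: free; exists j].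
pose f (o : option 'I_k) := if o is Some j then s j else tau.
have /fin_all_exists [h fh] o : exists i, f o = g i.
  by case: o => [j|] //=; apply: S_g (Ss j).
suff /leq_card : injective h by rewrite card_option !card_ord; lia.
move=> o1 o2 /(congr1 g); rewrite -!fh.
case: o1 => [j1|]; case: o2 => [j2|] //= eq_s.
- by congr Some; apply: (injS _ _ (s j1)); rewrite Ss ?eq_s.
- by case: (no_tau j1); rewrite Ss eq_s.
- by case: (no_tau j2); rewrite Ss eq_s.
Qed.

End Slots.

Section StreamSlots.
Variables (X : eqType) (k : nat).
Implicit Types (S : 'I_k -> option (nat -> X)) (a : X).

Definition advance_slots S a : 'I_k -> option (nat -> X) :=
  fun j => if S j is Some s then if s 0 == a then Some (fun i => s i.+1) else None else None.

Lemma advance_slotsE S a j s : S j = Some s -> s 0 = a ->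
  advance_slots S a j = Some (fun i => s i.+1).
Proof. by rewrite /advance_slots => -> ->; rewrite eqxx. Qed.

Lemma advance_slots_Some S a j s' : advance_slots S a j = Some s' ->
  exists2 s, S j = Some s & s 0 = a /\ s' = (fun i => s i.+1).
Proof.
by rewrite /advance_slots; case: (S j) => // s; case: eqP => // s0 [<-]; exists s.
Qed.

Lemma advance_slots_inj S a : slots_inj S -> slots_inj (advance_slots S a).
Proof.
move=> injS j1 j2 s /advance_slots_Some [s1 S1 [s10 ->]] /advance_slots_Some [s2 S2 [s20 eq_s]].
apply: (injS j1 j2 s1) => //; rewrite S2; congr Some; apply: funext => -[|i].
  by rewrite s10 s20.
by have := congr1 (fun s => s i) eq_s.
Qed.

End StreamSlots.

Section Forward.
Variables (I O : finType) (Phi : ctl I O) (aut : ctl I O -> nbw (sletter I O)).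
Hypothesis aut_for : forall e, e \in F_exist Phi -> nbw_for (aut e) (path_of e).
Variable M : moore I (outval O).
Hypothesis M_realises : forall pi, csat M Phi pi 0.

Local Notation k := (kstates Phi aut).
Local Notation history := (seq (inval I)).
Local Notation stream := (nat -> inval I).

Definition extend (h : history) (m : nat) : inval I := nth [ffun => false] h m.

Definition holds (g : ctl I O) (h : history) : bool := `[< csat M g (extend h) (size h) >].

Definition history_letter (h : history) (a : inval I) : sletter I O :=
  (a, (mout (foldl (@mtrans _ _ M) (minit M) h), fun g => holds g h)).

Local Notation winning_at h q := (winning (step history_letter) accepting (h, q)).

Lemma holds_mkseq g pi t : quantified g -> holds g (mkseq pi t) <-> csat M g pi t.
Proof.
have ext_pi m : m < t -> extend (mkseq pi t) m = pi m by move=> mt; rewrite /extend nth_mkseq.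
move=> qg; rewrite /holds size_mkseq; split=> [/asboolP|sat]; last apply/asboolP.
  exact: csat_quantified_prefix.
by apply: csat_quantified_prefix sat => // m /ext_pi ->.
Qed.

Lemma lsat_skeleton_history p pi t :
  lsat (skeleton p) (history_word history_letter pi) t <-> csat M p pi t.
Proof.
split; [apply: (@lsat_tr_sound _ _ _ predT) | apply: (@lsat_tr_complete _ _ _ predT)].
all: by rewrite ?all_predT // => g t' _ qg /(holds_mkseq _ _ qg).
Qed.

Definition target (h : history) (e : ctl I O) : stream :=
  if pselect (exists2 q : nstate (aut e), ninit q & winning_at h q) is left ex_q
  then strategy_input history_letter (h, sval (cid2 ex_q)) else fun _ => [ffun => false].

Lemma target_spec h e : e \in F_exist Phi -> holds e h ->
  exists q : nstate (aut e),
    [/\ ninit q, winning_at h q & target h e = strategy_input history_letter (h, q)].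
Proof.
move=> eF he; rewrite /target; case: pselect => [ex_q|[]].
  by case: (cid2 ex_q) => q q0 wq; exists q.
have := eF; rewrite mem_F_exist => /andP [_]; case: e eF he => // p eF /asboolP [pi [eq_pi sat]] _.
have <- : mkseq pi (size h) = h.
  by rewrite -[RHS](mkseq_nth [ffun => false]); apply: mkseq_eq_prefix.
apply: accepts_winning; apply/(aut_for eF); rewrite -lsat_shift addn0.
exact/lsat_skeleton_history.
Qed.

Definition strategy_stream (h : history) (s : stream) :=
  exists2 e, e \in F_exist Phi &
    exists2 q : nstate (aut e), winning_at h q & s = strategy_input history_letter (h, q).

Definition slots_ok (h : history) (S : 'I_k -> option stream) :=
  (forall j s, S j = Some s -> strategy_stream h s) /\ slots_inj S.

Lemma slots_ok_advance h S a : slots_ok h S -> slots_ok (rcons h a) (advance_slots S a).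
Proof.
move=> [S_strat injS]; split=> [j s'|]; last exact: advance_slots_inj.
move=> /advance_slots_Some [s /S_strat [e eF [q wq ->]] [<- ->]].
have [q' wq' tail_s] := strategy_input_tail wq.
by exists e => //; exists q'.
Qed.

Definition tagged_states : seq {e : ctl I O & nstate (aut e)} :=
  flatten [seq [seq Tagged (fun e => nstate (aut e)) q | q <- enum (nstate (aut e))]
          | e <- F_exist Phi].

Lemma size_tagged_states : size tagged_states = k.
Proof.
rewrite size_flatten /shape -map_comp sumnE big_map.
by apply: eq_bigr => e _ /=; rewrite size_map -cardE.
Qed.

Lemma strategy_stream_index h s : strategy_stream h s ->
  exists i, s = strategy_input history_letter (h, tagged (tnth (in_tuple tagged_states) i)).
Proof.
move=> [e eF [q _ ->]]; set x := Tagged (fun e => nstate (aut e)) q.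
have x_in : index x tagged_states < size tagged_states.
  by rewrite index_mem; apply/flatten_mapP; exists e => //; apply: map_f; rewrite mem_enum.
by exists (Ordinal x_in); rewrite (tnth_nth x) nth_index // -index_mem.
Qed.

Lemma free_slot_for_target h S e : slots_ok h S -> e \in F_exist Phi -> holds e h ->
  (forall j, S j <> Some (target h e)) -> exists j, S j = None.
Proof.
move=> [S_strat injS] eF he.
pose g i := strategy_input history_letter (h, tagged (tnth (in_tuple tagged_states) i)).
apply: (@free_slot _ _ _ g); rewrite ?size_tagged_states //.
  by move=> j s /S_strat /strategy_stream_index.
apply: strategy_stream_index; have [q [_ wq ->]] := target_spec eF he.
by exists e => //; exists q.
Qed.

Definition insert_target h (S : 'I_k -> option stream) e :=
  if holds e h then insert_slot (target h e) S else S.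

Lemma insert_target_keep h S e j s : S j = Some s -> insert_target h S e j = Some s.
Proof. by rewrite /insert_target; case: ifP => // _; apply: insert_slot_keep. Qed.

Lemma insert_target_spec h S e : slots_ok h S -> e \in F_exist Phi ->
  slots_ok h (insert_target h S e) /\
  (holds e h -> exists j, insert_target h S e j = Some (target h e)).
Proof.
move=> okS eF; rewrite /insert_target; case: ifP => // he; have [S_strat injS] := okS.
split=> [|_].
  split; last exact: insert_slot_inj.
  move=> j s /(@insert_slot_Some _ _ (target h e) S) [Sj|->]; first exact: S_strat Sj.
  by have [q [_ wq ->]] := target_spec eF he; exists e => //; exists q.
apply: insert_slotP; case: (pselect (exists j, S j = Some (target h e))) => [[j Sj]|no_j].
  by exists j; left.
have [|j Sj] := free_slot_for_target okS eF he; last by exists j; right.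
by move=> j Sj; apply: no_j; exists j.
Qed.

Lemma foldl_insert_target l h S : {subset l <= F_exist Phi} -> slots_ok h S ->
  let S' := foldl (insert_target h) S l in
  [/\ slots_ok h S', forall j s, S j = Some s -> S' j = Some s
    & forall e, e \in l -> holds e h -> exists j, S' j = Some (target h e)].
Proof.
elim: l S => [|e l IH] S /= lF okS; first by split.
have eF : e \in F_exist Phi by apply: lF; rewrite inE eqxx.
have [okS' has_e] := insert_target_spec okS eF.
have [|ok keep has] := IH _ _ okS'; first by move=> x xl; apply: lF; rewrite inE xl orbT.
split=> // [j s /insert_target_keep/keep //|e'].
rewrite inE => /predU1P [->|/has //] /has_e [j /keep]; by exists j.
Qed.

Definition schedule h (S : 'I_k -> option stream) := foldl (insert_target h) S (F_exist Phi).

Lemma schedule_spec h S : slots_ok h S ->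
  [/\ slots_ok h (schedule h S), forall j s, S j = Some s -> schedule h S j = Some s
    & forall e, e \in F_exist Phi -> holds e h -> exists j, schedule h S j = Some (target h e)].
Proof. exact: foldl_insert_target. Qed.

Definition machine_state := (history * ('I_k -> option stream))%type.

(* Slot [j] holds the directions still to be output as [d_j]; [v_(E phi)] points to the
   slot carrying the witness [target h (E phi)]. *)
Definition v_out (x : machine_state) (e : ctl I O) : 'I_k.+1 :=
  if holds e x.1 then
    if [pick j | `[< x.2 j = Some (target x.1 e) >]] is Some j then lift ord0 j else ord0
  else ord0.

Definition d_out (x : machine_state) (j : 'I_k) : inval I :=
  if x.2 j is Some s then s 0 else [ffun => false].

Definition ltl_machine : moore I (extout I O k) :=
  @Moore _ _ machine_state ([::], schedule [::] (fun _ => None))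
    (fun x a => (rcons x.1 a, schedule (rcons x.1 a) (advance_slots x.2 a)))
    (fun x => (mout (foldl (@mtrans _ _ M) (minit M) x.1),
               (v_out x, (d_out x, fun g => holds g x.1)))).

Definition state_at pi t : machine_state :=
  foldl (@mtrans _ _ ltl_machine) (minit ltl_machine) (mkseq pi t).

Local Notation ltl_word := (run_word ltl_machine).

Lemma state_at_succ pi t : state_at pi t.+1 =
  (rcons (state_at pi t).1 (pi t),
   schedule (rcons (state_at pi t).1 (pi t)) (advance_slots (state_at pi t).2 (pi t))).
Proof. by rewrite /state_at mkseqS foldl_rcons. Qed.

Lemma state_at_history pi t : (state_at pi t).1 = mkseq pi t.
Proof. by elim: t => // t IH; rewrite state_at_succ /= IH mkseqS. Qed.

Lemma x_out_ltl_word pi t : x_out (ltl_word pi t) = out_at M pi t.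
Proof. by rewrite /x_out /= state_at_history. Qed.

Lemma x_v_ltl_word pi t e : x_v (ltl_word pi t) e = v_out (state_at pi t) e.
Proof. by []. Qed.

Lemma x_p_ltl_word pi t a : x_p (ltl_word pi t) a = holds a (mkseq pi t).
Proof. by rewrite -state_at_history. Qed.

Lemma state_at_spec pi t : slots_ok (mkseq pi t) (state_at pi t).2 /\
  forall e, e \in F_exist Phi -> holds e (mkseq pi t) ->
    exists j, (state_at pi t).2 j = Some (target (mkseq pi t) e).
Proof.
elim: t => [|t [okt _]]; first by have [] := schedule_spec (S := fun _ => None) (h := [::]).
rewrite state_at_succ /= state_at_history -mkseqS.
by have [] := schedule_spec (slots_ok_advance (pi t) okt); rewrite -mkseqS.
Qed.

Lemma x_st_complete g pi t : g \in subformulas Phi -> quantified g ->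
  csat M g pi t -> x_st g (ltl_word pi t).
Proof.
move=> gPhi qg /(holds_mkseq _ _ qg); case: g gPhi qg => // p gPhi _ hp; last first.
  by rewrite /= x_p_ltl_word.
have eF : CE p \in F_exist Phi by rewrite mem_F_exist gPhi.
have [_ /(_ _ eF hp) [j Sj]] := state_at_spec pi t.
rewrite /= x_v_ltl_word /v_out state_at_history hp.
by case: pickP => [j' _|/(_ j)/asboolP //]; rewrite lift0.
Qed.

Lemma lsat_prime_complete f pi t : {subset subformulas f <= subformulas Phi} ->
  csat M f pi t -> lsat (Defs.prime Phi aut f) (ltl_word pi) t.
Proof.
move=> fPhi; apply: (@lsat_tr_complete _ _ _ (mem (subformulas Phi))) => //.
- by move=> t'; rewrite x_out_ltl_word.
- by move=> g t' gPhi qg; apply: x_st_complete.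
- exact/allP.
Qed.

Lemma followed_slot pi t j s : (state_at pi t).2 j = Some s ->
  (forall m, t <= m -> pi m = d_out (state_at pi m) j) ->
  forall i, (state_at pi (t + i)).2 j = Some (fun m => s (i + m)) /\ pi (t + i) = s i.
Proof.
move=> slot_j follow; elim=> [|i [slot_i pi_i]].
  by rewrite addn0 slot_j (follow t) // /d_out slot_j.
have slot_Si : (state_at pi (t + i.+1)).2 j = Some (fun m => s (i.+1 + m)).
  rewrite addnS state_at_succ /=; have [okt _] := state_at_spec pi (t + i).
  rewrite state_at_history in okt *.
  have [_ keep _] := schedule_spec (slots_ok_advance (pi (t + i)) okt).
  apply: keep; rewrite (advance_slotsE slot_i) ?pi_i ?addn0 //.
  by congr Some; apply: funext => m; rewrite addSnnS.
by split=> //; rewrite (follow _ (leq_addr _ _)) /d_out slot_Si addn0.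
Qed.

Lemma exist_obligation pi e (j : 'I_k) t : e \in F_exist Phi ->
  x_v (ltl_word pi t) e = j.+1 ->
  (forall m, t <= m -> (ltl_word pi m).1 = x_d (ltl_word pi m) j) ->
  lsat (Defs.prime Phi aut (path_of e)) (ltl_word pi) t.
Proof.
move=> eF; rewrite x_v_ltl_word /v_out state_at_history; case: ifP => // he.
case: pickP => // j' /asboolP + [/val_inj eq_j]; rewrite {j'}eq_j => slot_j follow.
have [q [q0 wq target_q]] := target_spec eF he.
have pi_strat i : pi (t + i) = strategy_input history_letter (mkseq pi t, q) i.
  by rewrite -target_q; have [] := followed_slot slot_j follow i.
apply: lsat_prime_complete.
  move=> g /subformulas_path_of; apply: subformulas_trans.
  by move: eF; rewrite mem_F_exist => /andP [].
apply/lsat_skeleton_history; rewrite -[t]addn0 lsat_shift.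
exact/(aut_for eF)/(strategy_accepts wq q0 pi_strat).
Qed.

Theorem ltl_realisable_of_ctl : ltl_realisable (Phi_LTL Phi aut).
Proof.
exists ltl_machine => pi; split; [|split].
- exact: lsat_prime_complete.
- apply/lsat_LBigAnd => e eF; apply/lsat_LBigAnd => j _; apply/lsat_LG => t _.
  apply/lsat_LImp => /eqP v_j; apply/lsat_LImp => /lsat_LG follow.
  by apply: (exist_obligation eF v_j) => m /follow /eqP.
- apply/lsat_LBigAnd => a; rewrite mem_F_univ => /andP [aPhi aA]; apply/lsat_LG => t _.
  case: a aPhi aA => // p aPhi _; apply/lsat_LImp => /=.
  rewrite x_p_ltl_word => /(@holds_mkseq (CA p) pi t isT) /(_ pi (fun _ _ => erefl)).
  apply: lsat_prime_complete => g gp.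
  by apply: subformulas_trans aPhi _; rewrite inE gp orbT.
Qed.

End Forward.

Section ClosedLoop.
Variables (I : finType) (X : Type) (M : moore I X) (policy : nat -> X -> inval I).

Fixpoint closed_loop_state n : mstate M :=
  if n is n'.+1 then
    mtrans (closed_loop_state n') (policy n' (mout (closed_loop_state n')))
  else minit M.

Definition closed_loop_input n := policy n (mout (closed_loop_state n)).

Lemma closed_loop_inputE n : closed_loop_input n = policy n (out_at M closed_loop_input n).
Proof.
rewrite /out_at; suff -> : foldl (@mtrans _ _ M) (minit M) (mkseq closed_loop_input n) =
  closed_loop_state n by [].
by elim: n => // n IH; rewrite mkseqS foldl_rcons IH.
Qed.

End ClosedLoop.

Section Backward.
Variables (I O : finType) (Phi : ctl I O) (aut : ctl I O -> nbw (sletter I O)).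
Local Notation k := (kstates Phi aut).
Variable M : moore I (extout I O k).
Hypothesis M_realises : forall pi, lsat (Phi_LTL Phi aut) (fun t => (pi t, out_at M pi t)) 0.

Definition ctl_machine : moore I (outval O) :=
  Moore (minit M) (@mtrans _ _ M) (fun s => (mout s).1).

Local Notation word := (run_word M).

Lemma lsat_prime_Phi pi : lsat (Defs.prime Phi aut Phi) (word pi) 0.
Proof. by have [] := M_realises pi. Qed.

Lemma exist_obligation_realised pi e (j : 'I_k) t : e \in F_exist Phi ->
  x_v (word pi t) e = j.+1 ->
  (forall m, t <= m -> pi m = x_d (word pi m) j) ->
  lsat (Defs.prime Phi aut (path_of e)) (word pi) t.
Proof.
move=> eF /eqP v_j follow; have [_ [/lsat_LBigAnd /(_ e eF) + _]] := M_realises pi.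
move=> /lsat_LBigAnd /(_ j (mem_enum _ _)) /lsat_LG /(_ t (leq0n _)) /lsat_LImp /(_ v_j).
by move=> /lsat_LImp; apply; apply/lsat_LG => m /follow pi_m; apply/eqP.
Qed.

Lemma univ_obligation_realised pi a t : a \in F_univ Phi -> x_p (word pi t) a ->
  lsat (Defs.prime Phi aut (path_of a)) (word pi) t.
Proof.
move=> aF pa; have [_ [_ /lsat_LBigAnd /(_ a aF)]] := M_realises pi.
by move=> /lsat_LG /(_ t (leq0n _)) /lsat_LImp; apply.
Qed.

Definition follow_direction pi t (j : 'I_k) : nat -> inval I :=
  closed_loop_input M (fun n o => if n < t then pi n else o.2.2.1 j).

Lemma lsat_prime_sound f pi t :
  (forall g, g \in subformulas f -> quantified g ->
     forall pi t, x_st g (word pi t) -> csat ctl_machine g pi t) ->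
  lsat (Defs.prime Phi aut f) (word pi) t -> csat ctl_machine f pi t.
Proof.
move=> st_sound; apply: (@lsat_tr_sound _ _ _ (mem (subformulas f))) => //.
by move=> g t' gf qg; apply: st_sound.
Qed.

Lemma x_st_sound f : forall g, g \in subformulas f -> g \in subformulas Phi ->
  quantified g -> forall pi t, x_st g (word pi t) -> csat ctl_machine g pi t.
Proof.
elim: f => [||i|i|o|o|a IHa b IHb|a IHa b IHb|a IH|a IHa b IHb|a IHa b IHb|a IH|a IH] g;
  rewrite /= in_cons => /predU1P [->|]; rewrite ?mem_cat //; try by move=> _ /=.
all: try by [move=> /orP [/IHa|/IHb] | exact: IH].
all: move=> aPhi _ pi t.
all: have a_sound pi' t' : lsat (Defs.prime Phi aut a) (word pi') t' -> csat ctl_machine a pi' t'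
  by apply: lsat_prime_sound => h ha; apply: IH => //;
     apply: subformulas_trans aPhi _; rewrite /= in_cons ha orbT.
- rewrite /= /x_v /=; case: (unliftP ord0 ((out_at M pi t).2.1 (CE a))) => [j v_j _|-> //].
  pose pi' := follow_direction pi t j.
  have pi'_pi m : m < t -> pi' m = pi m.
    by move=> mt; rewrite /pi' /follow_direction closed_loop_inputE mt.
  exists pi'; split=> //; apply: a_sound; apply: (@exist_obligation_realised _ (CE a) j).
  + by rewrite mem_F_exist aPhi.
  + by rewrite /x_v /run_word /= (out_at_eq_prefix M pi'_pi) v_j lift0.
  + by move=> m tm; rewrite /pi' /follow_direction closed_loop_inputE ltnNge tm.
- move=> pa pi' pi'_pi; apply: a_sound; apply: (@univ_obligation_realised _ (CA a)).
  + by rewrite mem_F_univ aPhi.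
  + by rewrite /x_p /run_word /= (out_at_eq_prefix M pi'_pi).
Qed.

Theorem ctl_realisable_of_ltl : ctl_realisable Phi.
Proof.
exists ctl_machine => pi; apply: lsat_prime_sound (lsat_prime_Phi pi) => g gPhi.
exact: (x_st_sound gPhi gPhi).
Qed.

End Backward.

Theorem mainTheorem1 (I O : finType) (Phi : ctl I O)
  (aut : ctl I O -> nbw (sletter I O)) :
  is_state Phi ->
  (forall e, e \in F_exist Phi -> nbw_for (aut e) (path_of e)) ->
  ctl_realisable Phi <-> ltl_realisable (Phi_LTL Phi aut).
Proof.
move=> _ aut_for; split=> [[M M_realises]|[M M_realises]].
- exact: (ltl_realisable_of_ctl aut_for M_realises).
- exact: (ctl_realisable_of_ltl M_realises).
Qed.
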